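(* Let $\gamma\geq0$, $G=(V,E,\omega)\in\mathcal C_\gamma$, $u_0,v_0\in\mathcal V$, and let $u,v:[0,\infty)\to\mathcal V$ be the solutions (continuously differentiable in $t$) of $\frac{du}{dt}=-Lu$, $u(0)=u_0$ and $\frac{dv}{dt}=-Lv$, $v(0)=v_0$. If $(u_0)_i\leq(v_0)_i$ for all $i\in V$, then $u_i(t)\leq v_i(t)$ for all $t\geq0$ and all $i\in V$.
   Context: $\mathcal{G}$ is the set of finite, simple, connected, undirected, edge-weighted graphs $G=(V,E,\omega)$ with $V=\{1,\dots,n\}$, $n\geq2$, weights $\omega_{ij}=\omega_{ji}>0$ on edges, $0$ otherwise. $d_i=\sum_j\omega_{ij}$. $\mathcal V$: functions $V\to\mathbb R$. Fixed $r\in[0,1]$: $(\Delta u)_i=d_i^{-r}\sum_j\omega_{ij}(u_i-u_j)$, $\mathcal M(u)=\sum_id_i^ru_i$, $\mathrm{vol}(V)=\sum_id_i^r$, $\mathcal A(u)=\frac{\mathcal M(u)}{\mathrm{vol}(V)}\chi_V$. For $u\in\mathcal V$ let $\varphi$ be the unique solution of $\Delta\varphi=u-\mathcal A(u)$, $\mathcal M(\varphi)=0$, and $Lu:=\Delta u+\gamma\varphi$ (a linear operator on $\mathcal V$). For a proper subset $S\subsetneq V$, the equilibrium measure $\nu^S$ is the unique $\nu\in\mathcal V$ with $(\Delta\nu)_i=1$ on $S$ and $\nu_i=0$ off $S$. $f^j:=\nu^{V\setminus\{j\}}-\mathcal A(\nu^{V\setminus\{j\}})$. $\mathcal C^0=\{G\in\mathcal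 G:\forall j\ \forall i\neq j:\ \omega_{ij}>0\text{ or }f^j_i\geq0\}$; for $\gamma>0$, $\mathcal C_\gamma=\{G\in\mathcal C^0:\forall j\ \forall i\neq j:\ \omega_{ij}=0\text{ or }d_i^{-r}\omega_{ij}+\gamma\frac{d_j^r}{\mathrm{vol}(V)}f^j_i>0\}$; $\mathcal C_0:=\mathcal G$. *)

From HB Require Import structures.
From mathcomp Require Import all_boot all_order all_algebra.
From mathcomp Require Import all_classical all_reals all_analysis.
From Stdlib Require Import ClassicalEpsilon.
Set Implicit Arguments. Unset Strict Implicit. Unset Printing Implicit Defensive.
Import Order.TTheory GRing.Theory Num.Theory.
Local Open Scope ring_scope.

Section GraphDefs.
Variables (R : realType) (n : nat).
Variable w : 'I_n -> 'I_n -> R.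

Definition is_graph : Prop :=
  [/\ (2 <= n)%N,
      (forall i j, w i j = w j i),
      (forall i j, 0 <= w i j),
      (forall i, w i i = 0) &
      (forall i j, connect (fun a b : 'I_n => 0 < w a b) i j)].

Definition deg (i : 'I_n) : R := \sum_(j < n) w i j.

Variable r : R.

Definition Delta (u : 'I_n -> R) : 'I_n -> R :=
  fun i => deg i `^ (- r) * \sum_(j < n) w i j * (u i - u j).

Definition mass (u : 'I_n -> R) : R := \sum_(i < n) deg i `^ r * u i.

Definition vol : R := \sum_(i < n) deg i `^ r.

Definition avg (u : 'I_n -> R) : 'I_n -> R := fun _ => mass u / vol.

Definition is_phi (u phi : 'I_n -> R) : Prop :=
  Delta phi = (fun i => u i - avg u i) /\ mass phi = 0.

(* "the unique solution" (its existence and uniqueness are facts about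
   connected graphs; we pick it with the choice operator) *)
Definition phi_of (u : 'I_n -> R) : 'I_n -> R :=
  epsilon (inhabits (fun _ => 0)) (is_phi u).

Variable gamma : R.

Definition Lop (u : 'I_n -> R) : 'I_n -> R :=
  fun i => Delta u i + gamma * phi_of u i.

Definition is_equilibrium (S : {set 'I_n}) (nu : 'I_n -> R) : Prop :=
  (forall i, i \in S -> Delta nu i = 1) /\ (forall i, i \notin S -> nu i = 0).

Definition equilibrium (S : {set 'I_n}) : 'I_n -> R :=
  epsilon (inhabits (fun _ => 0)) (is_equilibrium S).

Definition fj (j : 'I_n) : 'I_n -> R :=
  let nu := equilibrium (~: [set j]) in fun i => nu i - avg nu i.

Definition in_C0 : Prop :=
  forall j i : 'I_n, i != j -> 0 < w i j \/ 0 <= fj j i.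

Definition in_Cgamma : Prop :=
  if gamma == 0 then True else
  in_C0 /\
  forall j i : 'I_n, i != j ->
    w i j = 0 \/ 0 < deg i `^ (- r) * w i j + gamma * (deg j `^ r / vol) * fj j i.

End GraphDefs.

From HB Require Import structures.
From mathcomp Require Import all_boot all_order all_algebra.
From mathcomp Require Import all_classical all_reals all_analysis.
From mathcomp Require Import ring lra.
From Stdlib Require Import ClassicalEpsilon.
Import Order.TTheory GRing.Theory Num.Theory numFieldNormedType.Exports.
Local Open Scope ring_scope.
Set Implicit Arguments. Unset Strict Implicit.

(* The operator L is linear.  Solving for phi with the equilibrium measures gives
   phi(u) = - sum_j u_j d_j^r / vol(V) f^j, hence (L u)_i = sum_j L_ij u_j with
   L_ij = d_i^-r (delta_ij d_i - w_ij) - gamma d_j^r / vol(V) f^j_i, and the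
   conditions defining C_gamma say exactly that L_ij <= 0 for i <> j.  So
   z = v - u solves z' = - L z with z(0) >= 0, and y = e^(ct) z, for c dominating
   the diagonal of L, solves y' = A y with A >= 0 entrywise.  Such a y stays
   nonnegative: if a bounds the row sums of A, a d < 1 and y(t0) >= 0, a negative
   minimum m of all the y_k over [t0, t0 + d] would satisfy m >= a d m by the mean
   value theorem; steps of length d then cover [0, oo). *)

Lemma sum_delta (R : pzSemiRingType) n (F : 'I_n -> R) (i : 'I_n) :
  \sum_j (i == j)%:R * F j = F i.
Proof.
rewrite (bigD1 i) //= eqxx mul1r big1 ?addr0 // => j.
by rewrite eq_sym => /negPf ->; rewrite mul0r.
Qed.

Lemma solvable_of_trivial_kernel (F : fieldType) n (A : 'M[F]_n) :
  (forall v : 'rV_n, v *m A = 0 -> v = 0) -> forall b : 'rV_n, exists x, x *m A = b.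
Proof.
move=> A_inj b; have A_unit : A \in unitmx by rewrite -row_free_unit inj_row_free.
by exists (b *m invmx A); rewrite mulmxKV.
Qed.

Section GraphLaplacian.
Variables (R : realType) (n : nat) (w : 'I_n -> 'I_n -> R) (r : R).
Hypothesis w_graph : is_graph w.

Definition lap (u : 'I_n -> R) (i : 'I_n) : R := \sum_j w i j * (u i - u j).

Let w_sym i j : w i j = w j i. Proof. by case: w_graph. Qed.
Let w_ge0 i j : 0 <= w i j. Proof. by case: w_graph. Qed.

Lemma deg_gt0 i : 0 < deg w i.
Proof.
have [n_ge2 _ _ _ w_conn] := w_graph.
have /card_gt0P[k] : (0 < #|[set~ i]%SET|)%N.
  by rewrite cardsC1 card_ord; case: n n_ge2 i => [|[]].
rewrite in_setC1 => ki.
have /connectP[[|a p] /= ia_path k_last] := w_conn i k; first by rewrite k_last eqxx in ki.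
case/andP: ia_path => w_ia _.
by rewrite /deg (bigD1 a) //= ltr_pwDl // sumr_ge0.
Qed.

Lemma powRN_mul_deg i : deg w i `^ (- r) * deg w i `^ r = 1.
Proof. by rewrite powRN mulVf // gt_eqF // powR_gt0 // deg_gt0. Qed.

Lemma vol_gt0 : 0 < vol w r.
Proof.
have [n_ge2 _ _ _ _] := w_graph.
rewrite /vol (bigD1 (Ordinal n_ge2)) //= ltr_pwDl ?powR_gt0 ?deg_gt0 //.
by rewrite sumr_ge0 // => i _; rewrite powR_ge0.
Qed.

Lemma Delta_lap u i : Delta w r u i = deg w i `^ (- r) * lap u i.
Proof. by []. Qed.

Lemma lap_sum_delta u i : lap u i = \sum_j ((i == j)%:R * deg w i - w i j) * u j.
Proof.
under eq_bigr do rewrite mulrBl -mulrA.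
by rewrite sumrB sum_delta /lap /deg mulr_suml -sumrB; apply: eq_bigr => j _; ring.
Qed.

Lemma sum_lap u : \sum_i lap u i = 0.
Proof.
have swap : \sum_i lap u i = \sum_i \sum_j w i j * (u j - u i).
  by rewrite exchange_big; apply: eq_bigr => i _; apply: eq_bigr => j _; rewrite w_sym.
have flip : \sum_i \sum_j w i j * (u j - u i) = - \sum_i lap u i.
  by rewrite -sumrN; apply: eq_bigr => i _; rewrite -sumrN; apply: eq_bigr => j _; ring.
lra.
Qed.

Lemma mass_Delta u : mass w r (Delta w r u) = 0.
Proof.
rewrite -(sum_lap u); apply: eq_bigr => i _.
by rewrite Delta_lap mulrA [deg w i `^ r * _]mulrC powRN_mul_deg mul1r.
Qed.

Lemma sum_mul_lap u :
  \sum_i u i * lap u i = 2^-1 * \sum_i \sum_j w i j * (u i - u j) ^+ 2.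
Proof.
pose S := \sum_i \sum_j w i j * (u j * (u j - u i)).
have lhs : \sum_i u i * lap u i = S.
  rewrite /S exchange_big; apply: eq_bigr => i _; rewrite mulr_sumr.
  by apply: eq_bigr => j _; rewrite w_sym; ring.
have split_sq : \sum_i \sum_j w i j * (u i - u j) ^+ 2 = 2 * S.
  rewrite -lhs mulr2n mulrDl mul1r {1}lhs /S -big_split /=; apply: eq_bigr => i _.
  by rewrite mulr_sumr -big_split /=; apply: eq_bigr => j _; ring.
by rewrite lhs split_sq mulKf ?pnatr_eq0.
Qed.

Lemma sum_mul_lap_eq0_const u : \sum_i u i * lap u i = 0 -> forall i j, u i = u j.
Proof.
have [_ _ _ _ w_conn] := w_graph.
rewrite sum_mul_lap => /eqP; rewrite mulf_eq0 invr_eq0 pnatr_eq0 /= => /eqP energy0.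
have term_ge0 i j : 0 <= w i j * (u i - u j) ^+ 2 by rewrite mulr_ge0 ?sqr_ge0.
have adj_eq i j : 0 < w i j -> u i = u j.
  move=> w_ij; have /psumr_eq0P/(_ j isT) : \sum_j w i j * (u i - u j) ^+ 2 = 0.
    by apply: (psumr_eq0P _ energy0) => // k _; rewrite sumr_ge0.
  move=> /(_ (fun k _ => term_ge0 i k))/eqP.
  by rewrite mulf_eq0 gt_eqF //= sqrf_eq0 subr_eq0 => /eqP.
move=> i j.
have u_closed : fingraph.closed (fun a b => 0 < w a b) [pred k | u k == u i].
  by move=> a b /adj_eq; rewrite !inE => ->.
by have := closed_connect u_closed (w_conn i j); rewrite !inE eqxx => /esym/eqP.
Qed.

Lemma equilibrium_exists (S : {set 'I_n}) (j : 'I_n) :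
  j \notin S -> exists nu, is_equilibrium w r S nu.
Proof.
move=> jS.
pose A : 'M[R]_n :=
  \matrix_(k, i) (if i \in S then (i == k)%:R * deg w i - w i k else (i == k)%:R).
have col_A (x : 'rV_n) i : (x *m A) 0 i = if i \in S then lap (x 0) i else x 0 i.
  rewrite mxE; under eq_bigr do rewrite mxE; case: ifP => _.
    by rewrite lap_sum_delta; apply: eq_bigr => k _; rewrite mulrC.
  by under eq_bigr do rewrite mulrC; rewrite sum_delta.
have A_inj (x : 'rV_n) : x *m A = 0 -> x = 0.
  move=> xA0; have x_S i : if i \in S then lap (x 0) i = 0 else x 0 i = 0.
    by have := col_A x i; rewrite xA0 mxE; case: ifP.
  have : \sum_i x 0 i * lap (x 0) i = 0.
    by apply: big1 => i _; move: (x_S i); case: ifP => _ ->; rewrite ?mulr0 ?mul0r.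
  move=> /sum_mul_lap_eq0_const x_const; apply/rowP => i.
  by rewrite mxE (x_const i j); move: (x_S j); rewrite (negbTE jS).
pose b : 'rV_n := \row_i (if i \in S then deg w i `^ r else 0).
have [x xA] := solvable_of_trivial_kernel A_inj b.
exists (x 0); split => i iS; have := col_A x i; rewrite xA mxE.
  by rewrite iS Delta_lap => <-; rewrite powRN_mul_deg.
by rewrite (negbTE iS) => <-.
Qed.

Lemma equilibriumP (S : {set 'I_n}) (j : 'I_n) :
  j \notin S -> is_equilibrium w r S (equilibrium w r S).
Proof. by move=> /equilibrium_exists; exact: epsilon_spec. Qed.

Lemma Delta_equilibrium_setC1 (j i : 'I_n) :
  Delta w r (equilibrium w r (~: [set j])) i = 1 - (i == j)%:R * vol w r / deg w j `^ r.
Proof.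
have jS : j \notin ~: [set j] by rewrite !inE eqxx.
have [nu_S _] := equilibriumP jS.
set nu := equilibrium w r _ in nu_S *.
have [->|ij] := eqVneq i j; last by rewrite nu_S ?mul0r ?subr0 // !inE.
have dj_neq0 : deg w j `^ r != 0 by rewrite gt_eqF // powR_gt0 // deg_gt0.
have := mass_Delta nu; rewrite /mass (bigD1 j) //=.
rewrite (eq_bigr (fun k => deg w k `^ r)) => [mass0|k kj]; last first.
  by rewrite nu_S ?mulr1 // !inE.
apply: (mulfI dj_neq0); rewrite mul1r /vol (bigD1 j) //=.
have -> : deg w j `^ r * Delta w r nu j = - \sum_(k < n | k != j) deg w k `^ r by lra.
by field.
Qed.

Lemma mass_sub_avg u : mass w r (fun i => u i - avg w r u i) = 0.
Proof.
rewrite /mass /avg; under eq_bigr do rewrite mulrBr.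
by rewrite sumrB -mulr_suml mulrC mulfVK ?subrr // gt_eqF // vol_gt0.
Qed.

Lemma mass_fj j : mass w r (fj w r j) = 0.
Proof. exact: mass_sub_avg. Qed.

Lemma Delta_fj (j i : 'I_n) :
  Delta w r (fj w r j) i = 1 - (i == j)%:R * vol w r / deg w j `^ r.
Proof.
rewrite -Delta_equilibrium_setC1 !Delta_lap /lap; congr (_ * _).
by apply: eq_bigr => k _; rewrite /fj; congr (_ * _); rewrite /avg; ring.
Qed.

Lemma Delta_sum (c : 'I_n -> R) (f : 'I_n -> 'I_n -> R) i :
  Delta w r (fun k => \sum_j c j * f j k) i = \sum_j c j * Delta w r (f j) i.
Proof.
rewrite Delta_lap /lap; under [RHS]eq_bigr do rewrite Delta_lap /lap mulrCA.
rewrite -mulr_sumr; congr (_ * _).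
under eq_bigr do rewrite -sumrB mulr_sumr.
rewrite exchange_big /=; apply: eq_bigr => j _; rewrite mulr_sumr.
by apply: eq_bigr => k _; ring.
Qed.

Definition green_phi (z : 'I_n -> R) : 'I_n -> R :=
  fun i => \sum_j - (z j * deg w j `^ r / vol w r) * fj w r j i.

Lemma is_phi_green_phi z : is_phi w r z (green_phi z).
Proof.
have vol_neq0 : vol w r != 0 by rewrite gt_eqF // vol_gt0.
split.
  apply/funext => i; rewrite Delta_sum; under eq_bigr do rewrite Delta_fj.
  rewrite (eq_bigr (fun j => - (deg w j `^ r * z j) / vol w r + (i == j)%:R * z j)).
    by rewrite big_split /= sum_delta -mulr_suml sumrN mulNr addrC.
  move=> j _; have dj_neq0 : deg w j `^ r != 0 by rewrite gt_eqF // powR_gt0 // deg_gt0.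
  by case: (eqVneq i j) => _ /=; field; rewrite ?dj_neq0 ?vol_neq0.
rewrite /mass /green_phi; under eq_bigr do rewrite mulr_sumr.
rewrite exchange_big big1 // => j _.
under eq_bigr do rewrite mulrCA.
by rewrite -mulr_sumr -[\sum_i _]/(mass w r (fj w r j)) mass_fj mulr0.
Qed.

Lemma is_phi_unique z p q : is_phi w r z p -> is_phi w r z q -> p = q.
Proof.
move=> [Dp mp] [Dq mq]; pose x k := p k - q k.
have lap_x i : lap x i = 0.
  have lap_pq : lap p i = lap q i.
    apply: (@mulfI _ (deg w i `^ (- r))); first by rewrite gt_eqF // powR_gt0 // deg_gt0.
    by rewrite -!Delta_lap Dp Dq.
  have -> : lap x i = lap p i - lap q i.
    by rewrite /lap -sumrB; apply: eq_bigr => j _; rewrite /x; ring.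
  by rewrite lap_pq subrr.
have x_const : forall i j, x i = x j.
  by apply: sum_mul_lap_eq0_const; apply: big1 => i _; rewrite lap_x mulr0.
apply/funext => i; apply/eqP; rewrite -subr_eq0 -/(x i).
have : mass w r x = x i * vol w r.
  by rewrite /mass /vol mulr_sumr; apply: eq_bigr => k _; rewrite (x_const k i) mulrC.
have -> : mass w r x = mass w r p - mass w r q.
  by rewrite /mass -sumrB; apply: eq_bigr => k _; rewrite /x mulrBr.
by rewrite mp mq subrr => /esym/eqP; rewrite mulf_eq0 (gt_eqF vol_gt0) orbF.
Qed.

Lemma phi_ofE z : phi_of w r z = green_phi z.
Proof.
apply: (is_phi_unique _ (is_phi_green_phi z)).
by apply: epsilon_spec; exists (green_phi z); exact: is_phi_green_phi.
Qed.

Variable gamma : R.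

Definition Lmatrix (i j : 'I_n) : R :=
  deg w i `^ (- r) * ((i == j)%:R * deg w i - w i j)
  - gamma * (deg w j `^ r / vol w r) * fj w r j i.

Lemma Lop_sum x i : Lop w r gamma x i = \sum_j Lmatrix i j * x j.
Proof.
rewrite /Lop phi_ofE Delta_lap lap_sum_delta /green_phi !mulr_sumr -big_split /=.
by apply: eq_bigr => j _; rewrite /Lmatrix; ring.
Qed.

Lemma Lmatrix_offdiag_le0 i j :
  0 <= gamma -> in_Cgamma w r gamma -> i != j -> Lmatrix i j <= 0.
Proof.
move=> gamma_ge0 C_gamma ij.
have dNr_gt0 : 0 < deg w i `^ (- r) by rewrite powR_gt0 // deg_gt0.
have c_ge0 : 0 <= deg w j `^ r / vol w r by rewrite divr_ge0 ?powR_ge0 // ltW // vol_gt0.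
rewrite /Lmatrix (negbTE ij) mul0r sub0r mulrN.
have [->|gamma_neq0] := eqVneq gamma 0.
  by rewrite !mul0r subr0 oppr_le0 mulr_ge0 // ltW.
move: C_gamma; rewrite /in_Cgamma (negbTE gamma_neq0) => -[C0 C1].
have [w_ij0|] := C1 j i ij; last lra.
have [|f_ge0] := C0 j i ij; first by rewrite w_ij0 ltxx.
by rewrite w_ij0 mulr0 oppr0 sub0r oppr_le0; apply: mulr_ge0 => //; exact: mulr_ge0.
Qed.

End GraphLaplacian.

Local Open Scope classical_set_scope.

Lemma is_derive_expRM (R : realType) (c t : R) :
  is_derive t 1 (fun s => expR (c * s)) (c * expR (c * t)).
Proof.
have dcs : is_derive t (1 : R) ( *%R c) c.
  by have := is_deriveZ c (is_derive_id t (1 : R)); rewrite /GRing.scale /= mulr1.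
by rewrite mulrC; exact: is_derive1_comp.
Qed.

Lemma continuous_expRM (R : realType) (c : R) : continuous (fun s : R => expR (c * s)).
Proof.
by move=> x; apply: continuous_comp; [exact: mulrl_continuous | exact: continuous_expR].
Qed.

Lemma EVT_min_family (R : realType) (I : finType) (i0 : I) (f : I -> R -> R) (a b : R) :
  a <= b -> (forall i, {within `[a, b], continuous (f i)}) ->
  exists i, exists2 c, c \in `[a, b]%R & forall j t, t \in `[a, b]%R -> f i c <= f j t.
Proof.
move=> ab fc.
have /boolp.choice[c cmin] : forall i, exists c,
    c \in `[a, b]%R /\ forall t, t \in `[a, b]%R -> f i c <= f i t.
  by move=> i; have [c ? ?] := EVT_min ab (fc i); exists c.
case: (@arg_minP _ _ _ i0 xpredT (fun i => f i (c i))) => // i _ imin.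
exists i, (c i); first by case: (cmin i).
by move=> j t jt; apply: le_trans (imin j isT) _; case: (cmin j) => _; apply.
Qed.

Lemma MVT_lower_bound (R : realType) (f df : R -> R) (a b L : R) :
  a <= b -> {within `[a, b], continuous f} ->
  (forall x, x \in `]a, b[%R -> is_derive x 1 f (df x)) ->
  (forall x, x \in `]a, b[%R -> L <= df x) ->
  f a + L * (b - a) <= f b.
Proof.
move=> ab fc fd dfL; case: (eqVneq a b) => [->|neab]; first by rewrite subrr mulr0 addr0.
have ltab : a < b by rewrite lt_neqAle neab.
have [c cab fab] := MVT ltab fd fc.
have : L * (b - a) <= df c * (b - a) by rewrite ler_wpM2r ?subr_ge0 ?dfL.
lra.
Qed.

Section PositiveSystem.
Variables (R : realType) (n : nat) (A : 'I_n -> 'I_n -> R) (y : R -> 'I_n -> R).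
Hypothesis A_ge0 : forall i j, 0 <= A i j.
Hypothesis y_cont :
  forall i, {within [set s : R | 0 <= s], continuous (fun t => y t i)}.
Hypothesis y_deriv : forall i (t : R), 0 < t ->
  is_derive t 1 (fun s => y s i) (\sum_j A i j * y t j).

Let a := \sum_i \sum_j A i j.

Let a_ge0 : 0 <= a.
Proof. by apply: sumr_ge0 => i _; apply: sumr_ge0. Qed.

Let row_sum_le i : \sum_j A i j <= a.
Proof.
by rewrite /a [X in _ <= X](bigD1 i) //= lerDl; apply: sumr_ge0 => k _; apply: sumr_ge0.
Qed.

Lemma positive_system_step (lo d : R) : 0 <= lo -> 0 < d -> a * d < 1 ->
  (forall i, 0 <= y lo i) -> forall i t, t \in `[lo, lo + d]%R -> 0 <= y t i.
Proof.
move=> lo0 d0 ad1 ylo i t tin.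
have y_cont_lo b k : {within `[lo, b], continuous (fun t => y t k)}.
  have sub : `[lo, b] `<=` [set s : R | 0 <= s].
    by move=> s /=; rewrite in_itv /= => /andP[+ _]; exact: le_trans.
  exact: continuous_subspaceW sub (@y_cont k).
have lo_le : lo <= lo + d by rewrite lerDl ltW.
have [k [s sin smin]] := EVT_min_family i lo_le (y_cont_lo (lo + d)).
rewrite leNgt; apply/negP => yti.
have m_lt0 : y s k < 0 by apply: le_lt_trans (smin i t tin) yti.
move: sin; rewrite in_itv /= => /andP[los sd].
have deriv_lb x : x \in `]lo, s[%R -> a * y s k <= \sum_j A k j * y x j.
  rewrite in_itv /= => /andP[lox xs].
  have xin : x \in `[lo, lo + d]%R by rewrite in_itv /= ltW //= ltW // (lt_le_trans xs).
  apply: le_trans (_ : (\sum_j A k j) * y s k <= _).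
    by rewrite ler_wnM2r // ltW.
  by rewrite mulr_suml; apply: ler_sum => j _; rewrite ler_wpM2l // smin.
have deriv x : x \in `]lo, s[%R -> is_derive x 1 (fun t => y t k) (\sum_j A k j * y x j).
  rewrite in_itv /= => /andP[lox _]; apply: y_deriv; exact: le_lt_trans lox.
have := MVT_lower_bound los (y_cont_lo s k) deriv deriv_lb.
have : a * y s k * d <= a * y s k * (s - lo).
  by apply: (ler_wnM2l (mulr_ge0_le0 a_ge0 (ltW m_lt0))); lra.
have := ylo k; nra.
Qed.

Lemma positive_system_nonneg : (forall i, 0 <= y 0 i) ->
  forall t, 0 <= t -> forall i, 0 <= y t i.
Proof.
move=> y0; pose d := (a + 1)^-1.
have a1_gt0 : 0 < a + 1 by have := a_ge0; lra.
have d_gt0 : 0 < d by rewrite invr_gt0.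
have ad_lt1 : a * d < 1 by rewrite /d ltr_pdivrMr //; lra.
have on_steps k : forall t, 0 <= t <= k%:R * d -> forall i, 0 <= y t i.
  elim: k => [|k IH] t /andP[t_ge0 t_le].
    by have -> : t = 0 by apply/eqP; rewrite eq_le t_ge0 andbT; lra.
  have [t_le'|t_gt] := leP t (k%:R * d); first by apply: IH; rewrite t_ge0.
  have lo_ge0 : 0 <= k%:R * d by rewrite mulr_ge0 // ltW.
  move=> i; apply: (positive_system_step lo_ge0 d_gt0 ad_lt1).
    by move=> j; apply: IH; rewrite lo_ge0 lexx.
  have -> : k%:R * d + d = k.+1%:R * d by rewrite -natr1 mulrDl mul1r.
  by rewrite in_itv /= (ltW t_gt).
move=> t t_ge0; apply: (on_steps (Num.bound (t / d))); rewrite t_ge0 /=.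
by rewrite -ler_pdivrMr // ltW // archi_boundP // divr_ge0 // ltW.
Qed.

End PositiveSystem.

Lemma metzler_system_nonneg (R : realType) n (M : 'I_n -> 'I_n -> R)
    (z : R -> 'I_n -> R) :
  (forall i j, i != j -> M i j <= 0) ->
  (forall i, {within [set s : R | 0 <= s], continuous (fun t => z t i)}) ->
  (forall i (t : R), 0 < t ->
     is_derive t 1 (fun s => z s i) (- \sum_j M i j * z t j)) ->
  (forall i, 0 <= z 0 i) -> forall t, 0 <= t -> forall i, 0 <= z t i.
Proof.
move=> M_offdiag z_cont z_deriv z0.
pose c := \sum_i `|M i i|.
pose A i j := (i == j)%:R * c - M i j.
pose y t i := expR (c * t) * z t i.
have A_ge0 i j : 0 <= A i j.
  rewrite /A; have [<-|ij] := eqVneq i j; last by rewrite mul0r sub0r oppr_ge0 M_offdiag.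
  rewrite mul1r subr_ge0; apply: le_trans (ler_norm _) _.
  by rewrite /c (bigD1 i) //= lerDl sumr_ge0.
have A_sum x i : \sum_j A i j * x j = c * x i - \sum_j M i j * x j.
  rewrite -(sum_delta (fun j => c * x j) i) -sumrB.
  by apply: eq_bigr => j _; rewrite /A; ring.
have y_cont i : {within [set s : R | 0 <= s], continuous (fun t => y t i)}.
  have exp_cont : {within [set s : R | 0 <= s], continuous (fun t => expR (c * t))} :=
    continuous_subspaceT (continuous_expRM (c := c)).
  by move=> t; exact: continuousM (exp_cont t) (@z_cont i t).
have y_deriv i (t : R) : 0 < t -> is_derive t 1 (fun s => y s i) (\sum_j A i j * y t j).
  move=> t_gt0.
  apply: (is_derive_eq (is_deriveM (@is_derive_expRM _ c t) (z_deriv i t t_gt0))).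
  rewrite A_sum /y /=.
  have -> : \sum_j M i j * (expR (c * t) * z t j) = expR (c * t) * \sum_j M i j * z t j.
    by rewrite mulr_sumr; apply: eq_bigr => j _; rewrite mulrCA.
  by rewrite /GRing.scale /=; ring.
move=> t t_ge0 i.
have := positive_system_nonneg A_ge0 y_cont y_deriv _ t_ge0 i.
rewrite /y mulr0 expR0 pmulr_rge0 ?expR_gt0 //; apply.
by move=> j; rewrite mul1r.
Qed.

Theorem lemma6p27 (R : realType) (n : nat) (w : 'I_n -> 'I_n -> R) (r gamma : R)
  (u0 v0 : 'I_n -> R) (u v : R -> 'I_n -> R) :
  is_graph w -> 0 <= r -> r <= 1 -> 0 <= gamma -> in_Cgamma w r gamma ->
  (* u solves du/dt = -L u on [0, oo), u(0) = u0 *)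
  u 0 = u0 ->
  (forall i, {within [set s : R | 0 <= s], continuous (fun t => u t i)}) ->
  (forall i (t : R), 0 < t -> is_derive t (1 : R) (fun s => u s i) (- Lop w r gamma (u t) i)) ->
  (* v solves dv/dt = -L v on [0, oo), v(0) = v0 *)
  v 0 = v0 ->
  (forall i, {within [set s : R | 0 <= s], continuous (fun t => v t i)}) ->
  (forall i (t : R), 0 < t -> is_derive t (1 : R) (fun s => v s i) (- Lop w r gamma (v t) i)) ->
  (forall i, u0 i <= v0 i) ->
  forall t : R, 0 <= t -> forall i, u t i <= v t i.
Proof.
move=> w_graph _ _ gamma_ge0 C_gamma <- u_cont u_deriv <- v_cont v_deriv u0_le_v0 t t_ge0 i.
rewrite -subr_ge0.
apply: (@metzler_system_nonneg _ _ (Lmatrix w r gamma) (fun s k => v s k - u s k)) => //.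
- by move=> k l; exact: Lmatrix_offdiag_le0.
- by move=> k s; exact: continuousB (v_cont k s) (u_cont k s).
- move=> k s s_gt0.
  apply: (is_derive_eq (is_deriveB (v_deriv k s s_gt0) (u_deriv k s s_gt0))).
  rewrite !Lop_sum // -opprD -sumrN -big_split /=.
  by congr (- _); apply: eq_bigr => j _; rewrite mulrBr.
- by move=> k; rewrite subr_ge0.
Qed.
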